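(* Let $\Sigma=\mathbb R$. There exists a class $\mathcal F\subseteq\mathbb R^{\mathbb R^*}$ of generators $f:\mathbb R^*\to\mathbb R$ such that $\mathrm{Pdim}(\mathcal F)=1$ but $\mathrm{Pdim}(\mathcal F^{\mathrm{e2e}(T)})=\infty$, already for $T=2$.
   Context: $\mathbb R^*$ is the set of finite sequences of reals. For $f:\mathbb R^*\to\mathbb R$, $\bar f(\mathbf x)$ is $\mathbf x$ with $f(\mathbf x)$ appended; $f^{\mathrm{CoT}(T)}=\bar f^{\circ T}$; $f^{\mathrm{e2e}(T)}(\mathbf x)$ is the last entry of $f^{\mathrm{CoT}(T)}(\mathbf x)$; $\mathcal F^{\mathrm{e2e}(T)}=\{f^{\mathrm{e2e}(T)}:f\in\mathcal F\}$. Pseudo-dimension $\mathrm{Pdim}(\mathcal H)$ of a real-valued class on a domain $\mathcal X$: the largest $D$ such that there exist $\mathbf x_1,\dots,\mathbf x_D\in\mathcal X$ and thresholds $\theta_1,\dots,\theta_D\in\mathbb R$ with $|\{(\mathrm{sign}(h(\mathbf x_1)-\theta_1),\dots,\mathrm{sign}(h(\mathbf x_D)-\theta_D)):h\in\mathcal H\}|=2^D$; it is $\infty$ if no largest such $D$ exists. *)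

From HB Require Import structures.
From mathcomp Require Import all_boot all_order all_algebra.
From mathcomp Require Import boolp classical_sets reals.
Set Implicit Arguments. Unset Strict Implicit. Unset Printing Implicit Defensive.
Import Order.TTheory GRing.Theory Num.Theory.
Local Open Scope ring_scope.

Section Defs.
Variable R : realType.

(* R^* is represented by seq R (finite sequences of reals). *)

Definition bar (f : seq R -> R) (x : seq R) : seq R := rcons x (f x).

Definition CoT (f : seq R -> R) (T : nat) : seq R -> seq R := iter T (bar f).

(* f^{e2e(T)} (x) = last entry of f^{CoT(T)}(x)
   (for T >= 1 the sequence is nonempty, so the default 0 is never used) *)
Definition e2e (f : seq R -> R) (T : nat) (x : seq R) : R := last 0 (CoT f T x).

Definition e2e_class (F : set (seq R -> R)) (T : nat) : set (seq R -> R) :=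
  [set g | exists2 f, F f & g = e2e f T].

End Defs.

Section Pdim.
Variables (R : realType) (X : Type).

(* The set of sign patterns (sign(h(x_1)-th_1), ..., sign(h(x_D)-th_D)), h in H,
   with sign encoded as the boolean  th_i <= h(x_i)  (sign(0) = +1). *)
Definition patterns (H : set (X -> R)) (D : nat) (xs : 'I_D -> X) (th : 'I_D -> R)
  : {set {ffun 'I_D -> bool}} :=
  [set b : {ffun 'I_D -> bool} |
     `[< exists2 h, H h & forall i : 'I_D, b i = (th i <= h (xs i)) >] ].

Definition pshatters_size (H : set (X -> R)) (D : nat) : Prop :=
  exists (xs : 'I_D -> X) (th : 'I_D -> R), #|patterns H xs th| = (2 ^ D)%N.

Definition Pdim_eq (H : set (X -> R)) (n : nat) : Prop :=
  pshatters_size H n /\ forall D, pshatters_size H D -> (D <= n)%N.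

Definition Pdim_infinite (H : set (X -> R)) : Prop :=
  ~ exists n, Pdim_eq H n.

End Pdim.

(** The generators [bit_generator a] ignore their input except for its length:
    on a one-entry prompt they output the parameter [a], and on a two-entry
    prompt [[:: u; v]] they output the [u]-th binary digit of [v].  As functions
    of [a] they are pointwise nondecreasing, so they form a chain and cannot
    pseudo-shatter two points.  After two chain-of-thought steps, however, the
    prompt [[:: j]] becomes [[:: j; a]] and the output is the [j]-th bit of [a];
    choosing [a] as the number whose binary digits are a prescribed pattern
    shatters the prompts [[:: 0]], ..., [[:: D - 1]] for every [D]. *)
From mathcomp Require Import all_boot all_order all_algebra.
From mathcomp Require Import boolp classical_sets reals.
From mathcomp Require Import lra.
Import Order.TTheory GRing.Theory Num.Theory.
Local Open Scope ring_scope.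

Lemma cards_ffun_bool_full D (A : {set {ffun 'I_D -> bool}}) :
  #|A| = (2 ^ D)%N <-> forall b, b \in A.
Proof.
have cardT : #|finset.setTfor {ffun 'I_D -> bool}| = (2 ^ D)%N.
  by rewrite cardsT card_ffun card_bool card_ord.
split=> [cardA b | fullA].
  have /eqP -> : A == finset.setTfor _.
    by rewrite eqEcard finset.subsetT cardT cardA leqnn.
  exact: finset.in_setT.
by rewrite -cardT; apply: eq_card => b; rewrite fullA finset.in_setT.
Qed.

Section PseudoShattering.
Context {R : realType} {X : Type}.
Implicit Types H : set (X -> R).

Lemma pshatters_sizeP H D :
  pshatters_size H D <->
  exists (xs : 'I_D -> X) (th : 'I_D -> R), forall b : {ffun 'I_D -> bool},
    exists2 h, H h & forall i, b i = (th i <= h (xs i)).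
Proof.
split=> -[xs [th shH]]; exists xs, th.
  by move=> b; move: shH => /cards_ffun_bool_full/(_ b); rewrite inE => /asboolP.
by apply/cards_ffun_bool_full => b; rewrite inE; apply/asboolP.
Qed.

Lemma pshatters_size1 H h1 h2 x :
  H h1 -> H h2 -> h1 x < h2 x -> pshatters_size H 1.
Proof.
move=> Hh1 Hh2 lt12; apply/pshatters_sizeP.
exists (fun=> x), (fun=> h2 x) => b.
exists (if b ord0 then h2 else h1); first by case: (b ord0).
by move=> i; rewrite (ord1 i); case: (b ord0); rewrite ?lexx // leNgt lt12.
Qed.

Definition pointwise_chain H := forall h1 h2, H h1 -> H h2 ->
  (forall x, h1 x <= h2 x) \/ (forall x, h2 x <= h1 x).

(* Two points cannot be shattered: the functions realizing the patterns
   (1, 0) and (0, 1) would have to cross. *)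
Lemma pointwise_chain_pshatters_le1 H D :
  pointwise_chain H -> pshatters_size H D -> (D <= 1)%N.
Proof.
move=> chainH /pshatters_sizeP[xs [th shH]]; rewrite leqNgt; apply/negP => D2.
pose i0 : 'I_D := Ordinal (ltnW D2); pose i1 : 'I_D := Ordinal D2.
have [h0 Hh0 e0] := shH [ffun i => i == i0].
have [h1 Hh1 e1] := shH [ffun i => i == i1].
have := e0 i0; have := e0 i1; have := e1 i0; have := e1 i1.
rewrite !ffunE !eqxx /= => /esym h1_hi /esym/negbT h1_lo /esym/negbT h0_lo /esym h0_hi.
rewrite -!ltNge in h1_lo h0_lo.
by have [le01|le10] := chainH _ _ Hh0 Hh1;
  [have := le01 (xs i0) | have := le10 (xs i1)]; lra.
Qed.

Lemma Pdim_infinite_of_pshatters H : (forall D, pshatters_size H D) -> Pdim_infinite H.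
Proof. by move=> shH [n [_ /(_ n.+1 (shH n.+1))]]; rewrite ltnn. Qed.

End PseudoShattering.

Fixpoint nat_of_bits (s : seq bool) : nat :=
  if s is x :: s' then (x + 2 * nat_of_bits s')%N else 0%N.

Definition nbit (j m : nat) : bool := odd (m %/ 2 ^ j).

Lemma nbit_nat_of_bits s j : nbit j (nat_of_bits s) = nth false s j.
Proof.
rewrite /nbit; elim: s j => [|x s IHs] [|j] /=; rewrite ?div0n //.
  by rewrite expn0 divn1 oddD oddM addbF oddb.
rewrite expnS divnMA -IHs; congr (odd (_ %/ _)).
by rewrite addnC mulnC divnMDl // divn_small ?addn0 //; case: x.
Qed.

Section BitGenerators.
Variable R : realType.

Definition bit_indicator (u v : R) : R :=
  if `[< exists j m : nat, [/\ u = j%:R, v = m%:R & nbit j m] >] then 1 else 0.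

Lemma bit_indicator_nat j m : bit_indicator j%:R m%:R = (nbit j m)%:R.
Proof.
rewrite /bit_indicator; case: asboolP => [[j' [m' [/eqP + /eqP + bit_jm]]]|nbit_jm].
  by rewrite !eqr_nat => /eqP-> /eqP->; rewrite bit_jm.
by case: (boolP (nbit j m)) => // bit_jm; case: nbit_jm; exists j, m.
Qed.

Definition bit_generator (a : R) (x : seq R) : R :=
  match x with [:: _] => a | [:: u; v] => bit_indicator u v | _ => 0 end.

Definition bit_generators : set (seq R -> R) := range bit_generator.

Lemma bit_generators_chain : pointwise_chain bit_generators.
Proof.
move=> _ _ [a _ <-] [b _ <-].
by have [ab|/ltW ba] := leP a b; [left|right] => -[|u [|v [|w s]]].
Qed.

Lemma bit_generators_pshatters_size1 : pshatters_size bit_generators 1.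
Proof.
apply: (@pshatters_size1 _ _ _ (bit_generator 0) (bit_generator 1) [:: 0]).
- by exists 0.
- by exists 1.
- exact: ltr01.
Qed.

Lemma e2e_bit_generator a u : e2e (bit_generator a) 2 [:: u] = bit_indicator u a.
Proof. by []. Qed.

Lemma e2e_bit_generators_pshatters D :
  pshatters_size (e2e_class bit_generators 2) D.
Proof.
apply/pshatters_sizeP; exists (fun i : 'I_D => [:: i%:R]), (fun=> 1) => b.
pose a : R := (nat_of_bits [seq b i | i <- enum 'I_D])%:R.
exists (e2e (bit_generator a) 2); first by exists (bit_generator a) => //; exists a.
move=> i; rewrite e2e_bit_generator bit_indicator_nat nbit_nat_of_bits.
rewrite (nth_map i) ?size_enum_ord // nth_ord_enum.
by case: (b i); rewrite ?lexx ?ler10.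
Qed.

End BitGenerators.

Theorem theoremE6 (R : realType) :
  exists F : set (seq R -> R),
    Pdim_eq F 1 /\ Pdim_infinite (e2e_class F 2).
Proof.
exists (bit_generators R); split.
  split=> [|D]; first exact: bit_generators_pshatters_size1.
  exact/pointwise_chain_pshatters_le1/bit_generators_chain.
exact/Pdim_infinite_of_pshatters/e2e_bit_generators_pshatters.
Qed.
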